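(* Let $T>0$, $n_0>0$, $\alpha>0$ and $P>0$. For each integer $k\ge1$ let $\omega_k>0$ be the unique positive solution of $2\arctan(\omega_k/\alpha)=k\pi-\omega_k T$, and set $\lambda_k=\frac{2\alpha P}{\alpha^2+\omega_k^2}$ (these are the Mercer eigenvalues on $[0,T]$ of the kernel $R_X(t_1,t_2)=P e^{-\alpha|t_1-t_2|}$). Define $$C(T)=\frac1{2T}\sum_{k=1}^{\infty}\log\left(1+\frac{\lambda_k}{n_0/2}\right),\qquad C_{\mathrm{sh}}=\frac1{4\pi}\int_{-\infty}^{\infty}\log\left(1+\frac{\frac{2P\alpha}{\alpha^2+\omega^2}}{n_0/2}\right)\mathrm{d}\omega .$$ Then for any fixed $T,n_0,\alpha>0$ there exists $\delta>0$ such that $C(T)>C_{\mathrm{sh}}$ holds strictly for every $P$ with $0<P<\delta$.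
   Context: Setting: the transmitted signal is a zero-mean stationary Gaussian process with autocorrelation $R_X(\tau)=Pe^{-\alpha|\tau|}$ (power spectral density $S_X(\omega)=2P\alpha/(\alpha^2+\omega^2)$), corrupted by additive white Gaussian noise of power spectral density $n_0/2$; $C(T)$ is the finite-time transmission rate over the window $[0,T]$ and $C_{\mathrm{sh}}$ is the Shannon capacity. Logarithms are natural. *)

From Stdlib Require Import Reals.
From Coquelicot Require Import Coquelicot.
Open Scope R_scope.

Definition lam (alpha P wk : R) : R := 2 * alpha * P / (alpha ^ 2 + wk ^ 2).

Definition is_omega (T alpha : R) (k : nat) (w : R) : Prop :=
  0 < w /\ 2 * atan (w / alpha) = INR k * PI - w * T.

Definition CT (T n0 alpha P : R) (omega : nat -> R) : R :=
  / (2 * T) * Series (fun n => ln (1 + lam alpha P (omega (S n)) / (n0 / 2))).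

Definition Csh (n0 alpha P : R) : R :=
  / (4 * PI) *
  RInt_gen (fun w => ln (1 + (2 * P * alpha / (alpha ^ 2 + w ^ 2)) / (n0 / 2)))
    (Rbar_locally m_infty) (Rbar_locally p_infty).

(* Put b = sqrt (alpha^2 + 4 alpha P / n0). Every summand of C(T) is then
   ln ((b^2 + omega_k^2) / (alpha^2 + omega_k^2)), and an explicit antiderivative gives
   C_sh = (b - alpha) / 2, so it suffices that some partial sum exceeds T (b - alpha).

   Discretize: for N = 2m and c = T / N write (alpha + s)^2 (1 + c s)^N = A(-s^2) + s B(-s^2).
   B is a polynomial of degree at most m, and at u = w^2 it has the sign of the sine of the
   phase 2 atan (w / alpha) + N atan (c w). So B vanishes at the m points rho_k^2 where the
   phase equals k pi, and rho_k >= omega_k because N atan (c w) <= w T. Factoring B,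
     ln (B(-b^2) / B(-alpha^2)) = sum_(k <= m) ln ((b^2 + rho_k^2) / (alpha^2 + rho_k^2))
                                <= sum_(k <= m) ln ((b^2 + omega_k^2) / (alpha^2 + omega_k^2)).
   The left side is explicit, since
     2 s B(-s^2) = (alpha + s)^2 (1 + c s)^N - (alpha - s)^2 (1 - c s)^N,
   and as N -> oo it tends to
     ln (((alpha + b)^2 e^(bT) - (b - alpha)^2 e^(-bT)) / (4 alpha b e^(alpha T))),
   which exceeds T (b - alpha). Hence C(T) > C_sh for every P > 0. *)

From Stdlib Require Import Reals Lra Lia ClassicalEpsilon FunctionalExtensionality.
From Coquelicot Require Import Coquelicot.
Open Scope R_scope.

(** * Polynomial functions *)

Fixpoint poly_deg_le (d : nat) (f : R -> R) : Prop :=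
  match d with
  | O => exists c, forall x, f x = c
  | S d => exists c g, poly_deg_le d g /\ forall x, f x = c + x * g x
  end.

Lemma poly_deg_le_ext d f g :
  poly_deg_le d f -> (forall x, g x = f x) -> poly_deg_le d g.
Proof.
  destruct d as [|d]; simpl.
  - intros [c Hc] H. exists c. intros x. rewrite H. apply Hc.
  - intros [c [h [Hh Hf]]] H. exists c, h. split; [exact Hh|].
    intros x. rewrite H. apply Hf.
Qed.

Lemma poly_deg_le_S d f : poly_deg_le d f -> poly_deg_le (S d) f.
Proof.
  revert f; induction d as [|d IH]; intros f Hf.
  - destruct Hf as [c Hc]. exists c, (fun _ => 0). split.
    + exists 0. reflexivity.
    + intros x. rewrite Hc. ring.
  - destruct Hf as [c [g [Hg Hf]]]. exists c, g. split; [apply IH, Hg | exact Hf].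
Qed.

Lemma poly_deg_le_plus d f g :
  poly_deg_le d f -> poly_deg_le d g -> poly_deg_le d (fun x => f x + g x).
Proof.
  revert f g; induction d as [|d IH]; intros f g Hf Hg.
  - destruct Hf as [c Hc], Hg as [e He]. exists (c + e). intros x. rewrite Hc, He. reflexivity.
  - destruct Hf as [c [f' [Hf' Hf]]], Hg as [e [g' [Hg' Hg]]].
    exists (c + e), (fun x => f' x + g' x). split; [apply IH; assumption|].
    intros x. rewrite Hf, Hg. ring.
Qed.

Lemma poly_deg_le_scal d k f : poly_deg_le d f -> poly_deg_le d (fun x => k * f x).
Proof.
  revert f; induction d as [|d IH]; intros f Hf.
  - destruct Hf as [c Hc]. exists (k * c). intros x. rewrite Hc. reflexivity.
  - destruct Hf as [c [g [Hg Hf]]]. exists (k * c), (fun x => k * g x).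
    split; [apply IH, Hg|]. intros x. rewrite Hf. ring.
Qed.

Lemma poly_deg_le_mul_id d f : poly_deg_le d f -> poly_deg_le (S d) (fun x => x * f x).
Proof. intros Hf. exists 0, f. split; [exact Hf|]. intros x. ring. Qed.

Lemma poly_deg_le_root_div d f r : poly_deg_le (S d) f ->
  exists q, poly_deg_le d q /\ forall x, f x = (r - x) * q x + f r.
Proof.
  revert f; induction d as [|d IH]; intros f Hf.
  - destruct Hf as [c [g [[e Hg] Hf]]]. exists (fun _ => - e). split.
    + exists (- e). reflexivity.
    + intros x. rewrite !Hf, !Hg. ring.
  - destruct Hf as [c [g [Hg Hf]]].
    destruct (IH g Hg) as [q [Hq Hgq]].
    exists (fun x => x * q x - g r). split.
    + apply poly_deg_le_ext with (fun x => - g r + x * q x); [|intros; ring].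
      exists (- g r), q. split; [exact Hq | reflexivity].
    + intros x. rewrite !Hf, (Hgq x). ring.
Qed.

Lemma poly_deg_le_factor n f (r : nat -> R) :
  poly_deg_le (S n) f ->
  (forall j, (j <= n)%nat -> f (r j) = 0) ->
  (forall i j, (i <= n)%nat -> (j <= n)%nat -> r i = r j -> i = j) ->
  exists C, forall x, f x = C * prod_f_R0 (fun j => r j - x) n.
Proof.
  revert f; induction n as [|n IH]; intros f Hf Hroot Hinj.
  - destruct (poly_deg_le_root_div 0 f (r O) Hf) as [q [[C Hq] Hfq]].
    exists C. intros x. rewrite Hfq, Hq, Hroot by lia. simpl. ring.
  - destruct (poly_deg_le_root_div (S n) f (r (S n)) Hf) as [q [Hq Hfq]].
    rewrite (Hroot (S n) (le_n _)) in Hfq.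
    destruct (IH q Hq) as [C HC].
    + intros j Hj. assert (Hrj : r j - r (S n) <> 0).
      { intros E. assert (j = S n) by (apply Hinj; [lia | lia | lra]). lia. }
      specialize (Hfq (r j)). rewrite Hroot, Rplus_0_r in Hfq by lia.
      symmetry in Hfq. apply Rmult_integral in Hfq as [E|E]; lra.
    + intros i j Hi Hj. apply Hinj; lia.
    + exists C. intros x. rewrite Hfq, HC. simpl. ring.
Qed.

Lemma prod_f_R0_pos g n : (forall j, (j <= n)%nat -> 0 < g j) -> 0 < prod_f_R0 g n.
Proof.
  induction n as [|n IH]; intros Hg; simpl; [apply Hg; lia|].
  apply Rmult_lt_0_compat; [apply IH; intros; apply Hg|apply Hg]; lia.
Qed.

Lemma ln_prod_f_R0 g n : (forall j, (j <= n)%nat -> 0 < g j) ->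
  ln (prod_f_R0 g n) = sum_f_R0 (fun j => ln (g j)) n.
Proof.
  induction n as [|n IH]; intros Hg; simpl; [reflexivity|].
  rewrite ln_mult, IH; [reflexivity | intros; apply Hg; lia | | apply Hg; lia].
  apply prod_f_R0_pos. intros; apply Hg; lia.
Qed.

Lemma prod_f_R0_div g h n : (forall j, (j <= n)%nat -> 0 < h j) ->
  prod_f_R0 g n / prod_f_R0 h n = prod_f_R0 (fun j => g j / h j) n.
Proof.
  induction n as [|n IH]; intros Hh; simpl; [reflexivity|].
  rewrite <- IH by (intros; apply Hh; lia).
  assert (0 < h (S n)) by (apply Hh; lia).
  assert (0 < prod_f_R0 h n) by (apply prod_f_R0_pos; intros; apply Hh; lia).
  field; lra.
Qed.

(** * The discretized determinant *)

(* [zpow_parts a c u j = (A, B)] with [(a + s)^2 (1 + c s)^j = A + s B] whenever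
   [s^2 = - u]: the powers computed in [R[s] / (s^2 + u)]. *)
Fixpoint zpow_parts (a c u : R) (j : nat) : R * R :=
  match j with
  | O => (a ^ 2 - u, 2 * a)
  | S j => let p := zpow_parts a c u j in (fst p - c * u * snd p, snd p + c * fst p)
  end.

Definition zpow_odd (a c : R) (N : nat) (u : R) : R := snd (zpow_parts a c u N).

Definition phase (a c : R) (N : nat) (w : R) : R := 2 * atan (w / a) + INR N * atan (c * w).

Lemma zpow_parts_S a c u j : zpow_parts a c u (S j) =
  (fst (zpow_parts a c u j) - c * u * snd (zpow_parts a c u j),
   snd (zpow_parts a c u j) + c * fst (zpow_parts a c u j)).
Proof. reflexivity. Qed.

Section ZpowPartsPoly.
Variables a c : R.
Let A j u := fst (zpow_parts a c u j).
Let B j u := snd (zpow_parts a c u j).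

Lemma zpow_parts_fst_step_poly d j :
  poly_deg_le (S d) (A j) -> poly_deg_le d (B j) -> poly_deg_le (S d) (A (S j)).
Proof.
  intros HA HB. apply poly_deg_le_ext with (fun u => A j u + (- c) * (u * B j u)).
  - apply poly_deg_le_plus; [exact HA|]. apply poly_deg_le_scal, poly_deg_le_mul_id, HB.
  - intros u. unfold A, B. simpl. ring.
Qed.

Lemma zpow_parts_snd_step_poly d j :
  poly_deg_le d (A j) -> poly_deg_le d (B j) -> poly_deg_le d (B (S j)).
Proof.
  intros HA HB. apply poly_deg_le_plus; [exact HB | apply poly_deg_le_scal, HA].
Qed.

Lemma zpow_parts_even_poly i :
  poly_deg_le (S i) (A (2 * i)) /\ poly_deg_le i (B (2 * i)).
Proof.
  induction i as [|i [HA HB]].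
  - split.
    + exists (a ^ 2), (fun _ => -1). split; [exists (-1); reflexivity|].
      intros u. unfold A. simpl. ring.
    + exists (2 * a). reflexivity.
  - replace (2 * S i)%nat with (S (S (2 * i))) by lia.
    assert (HA1 : poly_deg_le (S i) (A (S (2 * i))))
      by (apply zpow_parts_fst_step_poly; assumption).
    assert (HB1 : poly_deg_le (S i) (B (S (2 * i))))
      by (apply zpow_parts_snd_step_poly; [exact HA | apply poly_deg_le_S, HB]).
    split.
    + apply zpow_parts_fst_step_poly; [apply poly_deg_le_S, HA1 | exact HB1].
    + apply zpow_parts_snd_step_poly; assumption.
Qed.

End ZpowPartsPoly.

Lemma zpow_parts_real a c s j :
  (a + s) ^ 2 * (1 + c * s) ^ j
    = fst (zpow_parts a c (- s ^ 2) j) + s * snd (zpow_parts a c (- s ^ 2) j) /\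
  (a - s) ^ 2 * (1 - c * s) ^ j
    = fst (zpow_parts a c (- s ^ 2) j) - s * snd (zpow_parts a c (- s ^ 2) j).
Proof.
  induction j as [|j [H1 H2]]; [simpl; split; ring|].
  rewrite zpow_parts_S. cbn [fst snd].
  set (A := fst (zpow_parts a c (- s ^ 2) j)) in *.
  set (B := snd (zpow_parts a c (- s ^ 2) j)) in *.
  rewrite <- (tech_pow_Rmult (1 + c * s)), <- (tech_pow_Rmult (1 - c * s)). split.
  - transitivity ((1 + c * s) * ((a + s) ^ 2 * (1 + c * s) ^ j)); [ring|]. rewrite H1. ring.
  - transitivity ((1 - c * s) * ((a - s) ^ 2 * (1 - c * s) ^ j)); [ring|]. rewrite H2. ring.
Qed.

Lemma zpow_odd_neg_sq a c N s :
  2 * s * zpow_odd a c N (- s ^ 2)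
    = (a + s) ^ 2 * (1 + c * s) ^ N - (a - s) ^ 2 * (1 - c * s) ^ N.
Proof. destruct (zpow_parts_real a c s N) as [H1 H2]. unfold zpow_odd. rewrite H1, H2. ring. Qed.

Lemma zpow_odd_neg_sq_self a c N : 0 < a ->
  zpow_odd a c N (- a ^ 2) = 2 * a * (1 + c * a) ^ N.
Proof.
  intros ha. apply (Rmult_eq_reg_l (2 * a)); [|lra].
  rewrite zpow_odd_neg_sq. destruct N; simpl; ring.
Qed.

(* With [s = i w], [(a + i w)^2 (1 + i c w)^j] has modulus
   [(a^2 + w^2) (1 + (c w)^2)^(j/2)] and argument [phase a c j w]. *)
Lemma zpow_parts_polar a c w j : 0 < a ->
  fst (zpow_parts a c (w ^ 2) j)
    = (a ^ 2 + w ^ 2) * sqrt (1 + (c * w)²) ^ j * cos (phase a c j w) /\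
  w * snd (zpow_parts a c (w ^ 2) j)
    = (a ^ 2 + w ^ 2) * sqrt (1 + (c * w)²) ^ j * sin (phase a c j w).
Proof.
  intros ha. unfold phase. induction j as [|j [H1 H2]].
  - simpl INR. rewrite Rmult_0_l, Rplus_0_r, pow_O, Rmult_1_r.
    rewrite cos_2a, sin_2a, cos_atan, sin_atan.
    assert (Hq : 0 < 1 + (w / a)²) by (unfold Rsqr; nra).
    pose proof (sqrt_sqrt _ (Rlt_le _ _ Hq)) as Hs.
    pose proof (sqrt_lt_R0 _ Hq) as Hs0.
    set (q := sqrt (1 + (w / a)²)) in *.
    cbn [zpow_parts fst snd]. unfold Rsqr in *.
    split.
    + replace (1 / q * (1 / q) - w / a / q * (w / a / q)) with ((1 - (w / a) * (w / a)) / (q * q))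
        by (field; lra).
      rewrite Hs. field. split; nra.
    + replace (2 * (w / a / q) * (1 / q)) with (2 * (w / a) / (q * q)) by (field; lra).
      rewrite Hs. field. split; nra.
  - rewrite zpow_parts_S, S_INR. cbn [fst snd].
    replace (2 * atan (w / a) + (INR j + 1) * atan (c * w))
      with ((2 * atan (w / a) + INR j * atan (c * w)) + atan (c * w)) by ring.
    set (ph := 2 * atan (w / a) + INR j * atan (c * w)) in *.
    rewrite cos_plus, sin_plus, cos_atan, sin_atan.
    assert (Hq : 0 < 1 + (c * w)²) by (unfold Rsqr; nra).
    pose proof (sqrt_lt_R0 _ Hq) as Hs0.
    set (q := sqrt (1 + (c * w)²)) in *.
    rewrite <- (tech_pow_Rmult q j).
    split.
    + transitivity (fst (zpow_parts a c (w ^ 2) j)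
                      - (c * w) * (w * snd (zpow_parts a c (w ^ 2) j))); [ring|].
      rewrite H1, H2. field. lra.
    + transitivity (w * snd (zpow_parts a c (w ^ 2) j)
                      + (c * w) * fst (zpow_parts a c (w ^ 2) j)); [ring|].
      rewrite H1, H2. field. lra.
Qed.

Lemma zpow_odd_phase_root a c N w k : 0 < a -> 0 < w ->
  phase a c N w = INR k * PI -> zpow_odd a c N (w ^ 2) = 0.
Proof.
  intros ha hw Hph.
  destruct (zpow_parts_polar a c w N ha) as [_ H].
  rewrite Hph, sin_eq_0_1, Rmult_0_r in H
    by (exists (Z.of_nat k); rewrite INR_IZR_INZ; reflexivity).
  apply Rmult_integral in H as [H|H]; [lra | exact H].
Qed.

(** * Roots of the phase *)

Lemma atan_le_id x : 0 <= x -> atan x <= x.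
Proof.
  intros hx.
  destruct (MVT_gen (fun y => y - atan y) 0 x (fun y => 1 - / (1 + y²))) as [z [_ Hz]].
  - intros y _. auto_derive; [exact I|]. unfold Rsqr. field. nra.
  - intros y _. apply continuity_pt_filterlim.
    apply (@ex_derive_continuous R_AbsRing R_NormedModule (fun y => y - atan y)).
    auto_derive. exact I.
  - rewrite atan_0 in Hz.
    assert (0 <= 1 - / (1 + z²)).
    { assert (1 <= 1 + z²) by (unfold Rsqr; nra).
      assert (/ (1 + z²) <= 1) by (rewrite <- Rinv_1; apply Rinv_le_contravar; lra). lra. }
    nra.
Qed.

Lemma atan_ge_PI2_sub_inv x : 0 < x -> PI / 2 - / x <= atan x.
Proof.
  intros hx. assert (hx' : 0 < / x) by (apply Rinv_0_lt_compat, hx).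
  replace (atan x) with (PI / 2 - atan (/ x)) by (rewrite <- atan_inv, Rinv_inv; auto).
  pose proof (atan_le_id (/ x) (Rlt_le _ _ hx')). lra.
Qed.

Lemma phase_0 a c N : phase a c N 0 = 0.
Proof. unfold phase. rewrite Rmult_0_r, Rdiv_0_l, atan_0. ring. Qed.

Lemma phase_continuous a c N : continuity (phase a c N).
Proof.
  intros w. apply continuity_pt_filterlim.
  apply (@ex_derive_continuous R_AbsRing R_NormedModule (phase a c N)).
  unfold phase. auto_derive. exact I.
Qed.

Lemma phase_root a c N x : 0 < a -> 0 < c -> 0 < x < INR (N + 2) * PI / 2 ->
  exists w, 0 < w /\ phase a c N w = x.
Proof.
  intros ha hc [hx0 hx1].
  rewrite plus_INR in hx1. simpl INR in hx1.
  set (gap := (INR N + 2) * PI / 2 - x).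
  assert (hgap : 0 < gap) by (unfold gap; lra).
  assert (hN : 0 <= INR N) by apply pos_INR.
  assert (0 <= INR N / c) by (apply Rdiv_le_0_compat; lra).
  set (y := 2 * (2 * a + INR N / c) / gap).
  assert (hy : 0 < y) by (apply Rdiv_lt_0_compat; lra).
  assert (Hy : x < phase a c N y).
  { pose proof (atan_ge_PI2_sub_inv (y / a) ltac:(apply Rdiv_lt_0_compat; lra)) as H1.
    pose proof (atan_ge_PI2_sub_inv (c * y) ltac:(apply Rmult_lt_0_compat; lra)) as H2.
    assert (H3 : INR N * (PI / 2 - / (c * y)) <= INR N * atan (c * y))
      by (apply Rmult_le_compat_l; lra).
    assert (E : 2 * (PI / 2 - / (y / a)) + INR N * (PI / 2 - / (c * y)) = x + gap / 2).
    { assert (0 < 2 * a * c + INR N) by nra.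
      unfold y, gap. field. repeat split; lra. }
    unfold phase. lra. }
  destruct (IVT (fun w => phase a c N w - x) 0 y) as [z [[hz0 _] Hz]].
  - apply continuity_minus; [apply phase_continuous|].
    apply continuity_const. intros ? ?. reflexivity.
  - exact hy.
  - rewrite phase_0. lra.
  - lra.
  - exists z. destruct hz0 as [hz0 | <-]; [split; lra|].
    rewrite phase_0 in Hz. lra.
Qed.

Lemma phase_le a c N w : 0 < a -> 0 <= c -> 0 <= w ->
  phase a c N w <= 2 * atan (w / a) + w * (INR N * c).
Proof.
  intros ha hc hw. unfold phase.
  pose proof (atan_le_id (c * w) ltac:(nra)).
  assert (INR N * atan (c * w) <= INR N * (c * w))
    by (apply Rmult_le_compat_l; [apply pos_INR | lra]).
  lra.
Qed.

Lemma ln_le_sub1 x : 0 < x -> ln x <= x - 1.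
Proof.
  intros hx. rewrite <- (ln_exp (x - 1)). apply ln_le; [exact hx|].
  pose proof (exp_ineq1_le (x - 1)). lra.
Qed.

Lemma ln_1p_ge y : 0 <= y -> y - y ^ 2 <= ln (1 + y).
Proof.
  intros hy.
  pose proof (ln_le_sub1 (/ (1 + y)) ltac:(apply Rinv_0_lt_compat; lra)) as H.
  rewrite ln_Rinv in H by lra.
  assert (y - y ^ 2 <= y / (1 + y)).
  { apply (Rmult_le_reg_r (1 + y)); [lra|]. unfold Rdiv. rewrite Rmult_assoc, Rinv_l by lra. nra. }
  replace (/ (1 + y) - 1) with (- (y / (1 + y))) in H by (field; lra).
  lra.
Qed.

Lemma pow_1p_le_exp y n : -1 <= y -> (1 + y) ^ n <= exp (INR n * y).
Proof.
  intros hy.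
  replace (exp (INR n * y)) with (exp y ^ n)
    by (rewrite <- Rpower_pow by apply exp_pos; unfold Rpower; rewrite ln_exp; reflexivity).
  apply pow_incr. pose proof (exp_ineq1_le y). lra.
Qed.

Lemma exp_mul_le_pow_1p y n : 0 <= y -> exp (INR n * y) * (1 - INR n * y ^ 2) <= (1 + y) ^ n.
Proof.
  intros hy.
  rewrite <- (exp_ln ((1 + y) ^ n)), ln_pow by (try apply pow_lt; lra).
  assert (H : INR n * (y - y ^ 2) <= INR n * ln (1 + y))
    by (apply Rmult_le_compat_l; [apply pos_INR | apply ln_1p_ge, hy]).
  assert (Hexp : exp (INR n * y) * exp (- (INR n * y ^ 2)) <= exp (INR n * ln (1 + y))).
  { rewrite <- exp_plus. destruct (Rle_lt_or_eq_dec _ _ H) as [Hlt | Heq].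
    - left. apply exp_increasing. lra.
    - right. f_equal. lra. }
  pose proof (exp_ineq1_le (- (INR n * y ^ 2))).
  pose proof (exp_pos (INR n * y)).
  nra.
Qed.

(** * Comparison with the eigenfrequencies *)

Definition log_ratio (a b w : R) : R := ln ((b ^ 2 + w ^ 2) / (a ^ 2 + w ^ 2)).

Section LogRatio.
Variables a b : R.
Hypothesis hab : 0 < a < b.

Lemma log_ratio_nonneg w : 0 <= log_ratio a b w.
Proof.
  unfold log_ratio. rewrite <- ln_1. apply ln_le; [lra|].
  apply (Rmult_le_reg_r (a ^ 2 + w ^ 2)); [nra|].
  unfold Rdiv. rewrite Rmult_assoc, Rinv_l by nra. nra.
Qed.

Lemma log_ratio_le w : log_ratio a b w <= (b ^ 2 - a ^ 2) / (a ^ 2 + w ^ 2).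
Proof.
  unfold log_ratio. eapply Rle_trans; [apply ln_le_sub1, Rdiv_lt_0_compat; nra|].
  right. field. nra.
Qed.

Lemma log_ratio_antitone v w : 0 <= v <= w -> log_ratio a b w <= log_ratio a b v.
Proof.
  intros hvw. unfold log_ratio. apply ln_le; [apply Rdiv_lt_0_compat; nra|].
  replace ((b ^ 2 + w ^ 2) / (a ^ 2 + w ^ 2)) with (1 + (b ^ 2 - a ^ 2) / (a ^ 2 + w ^ 2))
    by (field; nra).
  replace ((b ^ 2 + v ^ 2) / (a ^ 2 + v ^ 2)) with (1 + (b ^ 2 - a ^ 2) / (a ^ 2 + v ^ 2))
    by (field; nra).
  apply Rplus_le_compat_l. unfold Rdiv. apply Rmult_le_compat_l; [nra|].
  apply Rinv_le_contravar; nra.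
Qed.

End LogRatio.

Lemma zpow_odd_ratio_prod a b c n (rho : nat -> R) : 0 < a -> 0 < c ->
  (forall j, (j <= n)%nat -> 0 < rho j /\ phase a c (2 * S n) (rho j) = INR (S j) * PI) ->
  zpow_odd a c (2 * S n) (- b ^ 2) / zpow_odd a c (2 * S n) (- a ^ 2)
    = prod_f_R0 (fun j => (rho j ^ 2 + b ^ 2) / (rho j ^ 2 + a ^ 2)) n.
Proof.
  intros ha hc Hrho.
  set (N := (2 * S n)%nat).
  destruct (poly_deg_le_factor n (zpow_odd a c N) (fun j => rho j ^ 2)) as [C HC].
  - apply (zpow_parts_even_poly a c (S n)).
  - intros j hj. destruct (Hrho j hj) as [hr hph]. exact (zpow_odd_phase_root a c N _ _ ha hr hph).
  - intros i j hi hj E.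
    destruct (Hrho i hi) as [hri phi], (Hrho j hj) as [hrj phj].
    assert (Er : rho i = rho j) by nra.
    rewrite Er, phj in phi.
    apply Rmult_eq_reg_r, INR_eq in phi; [lia | apply PI_neq0].
  - assert (Ha : 0 < zpow_odd a c N (- a ^ 2)).
    { rewrite zpow_odd_neg_sq_self by exact ha.
      apply Rmult_lt_0_compat; [lra|]. apply pow_lt. nra. }
    assert (Hshift : forall s, (fun j => rho j ^ 2 - - s ^ 2) = (fun j => rho j ^ 2 + s ^ 2))
      by (intros s; apply functional_extensionality; intros j; ring).
    rewrite !HC, !Hshift in *.
    assert (0 < prod_f_R0 (fun j => rho j ^ 2 + a ^ 2) n)
      by (apply prod_f_R0_pos; intros j _; nra).
    assert (C <> 0) by (intros ->; lra).
    rewrite <- prod_f_R0_div by (intros j _; nra).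
    field. lra.
Qed.

Lemma phase_root_ge_omega a c N T k w rho : 0 < a -> 0 <= c -> INR N * c <= T ->
  is_omega T a k w -> 0 < rho -> phase a c N rho = INR k * PI -> w <= rho.
Proof.
  intros ha hc hcT [hw Hw] hrho Hph.
  destruct (Rle_lt_dec w rho) as [H | H]; [exact H | exfalso].
  pose proof (phase_le a c N rho ha hc (Rlt_le _ _ hrho)).
  assert (atan (rho / a) < atan (w / a)).
  { apply atan_increasing. unfold Rdiv. apply Rmult_lt_compat_r; [apply Rinv_0_lt_compat|]; lra. }
  assert (hT : 0 <= T) by (pose proof (pos_INR N); nra).
  assert (rho * (INR N * c) <= rho * T) by (apply Rmult_le_compat_l; lra).
  assert (rho * T <= w * T) by (apply Rmult_le_compat_r; lra).
  lra.
Qed.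

Lemma sum_log_ratio_ge_zpow_odd a b T c n (omega : nat -> R) :
  0 < a < b -> 0 < c -> INR (2 * S n) * c <= T ->
  (forall k, (1 <= k)%nat -> is_omega T a k (omega k)) ->
  ln (zpow_odd a c (2 * S n) (- b ^ 2) / zpow_odd a c (2 * S n) (- a ^ 2))
    <= sum_f_R0 (fun j => log_ratio a b (omega (S j))) n.
Proof.
  intros hab hc hcT Hom.
  set (root j w := 0 < w /\ phase a c (2 * S n) w = INR (S j) * PI).
  set (rho j := epsilon (inhabits 0) (root j)).
  assert (Hrho : forall j, (j <= n)%nat -> root j (rho j)).
  { intros j hj. apply epsilon_spec, phase_root; [lra | exact hc | split].
    - apply Rmult_lt_0_compat; [apply lt_0_INR; lia | apply PI_RGT_0].
    - rewrite !plus_INR, !mult_INR, !S_INR. simpl INR.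
      assert (INR j <= INR n) by (apply le_INR, hj).
      pose proof PI_RGT_0. nra. }
  rewrite (zpow_odd_ratio_prod a b c n rho) by (lra || exact Hrho).
  rewrite ln_prod_f_R0 by (intros j hj; destruct (Hrho j hj); apply Rdiv_lt_0_compat; nra).
  apply sum_Rle. intros j hj. destruct (Hrho j hj) as [hr hph].
  assert (Homj : is_omega T a (S j) (omega (S j))) by (apply Hom; lia).
  replace ((rho j ^ 2 + b ^ 2) / (rho j ^ 2 + a ^ 2))
    with ((b ^ 2 + rho j ^ 2) / (a ^ 2 + rho j ^ 2)) by (f_equal; ring).
  apply log_ratio_antitone; [exact hab|]. split; [apply Rlt_le, Homj|].
  exact (phase_root_ge_omega a c _ T _ _ _ (proj1 hab) (Rlt_le _ _ hc) hcT Homj hr hph).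
Qed.

Lemma zpow_odd_neg_sq_ge a b c N : 0 <= c * b <= 1 ->
  (a + b) ^ 2 * exp (INR N * (c * b)) * (1 - INR N * (c * b) ^ 2)
    - (b - a) ^ 2 * / exp (INR N * (c * b))
  <= 2 * b * zpow_odd a c N (- b ^ 2).
Proof.
  intros hcb. rewrite zpow_odd_neg_sq.
  pose proof (exp_mul_le_pow_1p (c * b) N (proj1 hcb)) as Hlow.
  pose proof (pow_1p_le_exp (- (c * b)) N ltac:(lra)) as Hup.
  rewrite Ropp_mult_distr_r_reverse, exp_Ropp in Hup.
  replace (1 + - (c * b)) with (1 - c * b) in Hup by ring.
  replace ((a - b) ^ 2) with ((b - a) ^ 2) by ring.
  assert (0 <= (b - a) ^ 2) by apply pow2_ge_0.
  assert (0 <= (a + b) ^ 2) by apply pow2_ge_0.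
  apply Rplus_le_compat; [rewrite Rmult_assoc; apply Rmult_le_compat_l; lra|].
  apply Ropp_le_contravar, Rmult_le_compat_l; lra.
Qed.

Lemma zpow_odd_neg_sq_gt a b T : 0 < a < b -> 0 < T ->
  exists M, forall N, M < INR N -> 2 * a * exp (b * T) < zpow_odd a (T / INR N) N (- b ^ 2).
Proof.
  intros hab hT.
  assert (hbT : 0 < b * T) by nra.
  set (E := exp (b * T)).
  assert (hE : 1 < E) by (pose proof (exp_ineq1 (b * T) ltac:(lra)); unfold E; lra).
  assert (hE' : / E < 1) by (rewrite <- Rinv_1; apply Rinv_lt_contravar; lra).
  set (eta := (b - a) ^ 2 * (E - / E) / ((a + b) ^ 2 * E)).
  assert (heta : 0 < eta).
  { apply Rdiv_lt_0_compat; apply Rmult_lt_0_compat; try apply pow_lt; lra. }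
  assert (hq0 : 0 < b ^ 2 * T ^ 2 / eta) by (apply Rdiv_lt_0_compat; [nra | exact heta]).
  exists (b * T + b ^ 2 * T ^ 2 / eta). intros N hN.
  set (c := T / INR N).
  assert (hcN : INR N * c = T) by (unfold c; field; lra).
  assert (hcb : INR N * (c * b) = b * T) by (rewrite <- hcN; ring).
  assert (hcb2 : INR N * (c * b) ^ 2 = b ^ 2 * T ^ 2 / INR N) by (rewrite <- hcN; field; lra).
  assert (hc : 0 < c) by (unfold c; apply Rdiv_lt_0_compat; lra).
  assert (hq : b ^ 2 * T ^ 2 / INR N < eta).
  { apply (Rmult_lt_reg_r (INR N / eta)); [apply Rdiv_lt_0_compat; lra|].
    replace (b ^ 2 * T ^ 2 / INR N * (INR N / eta)) with (b ^ 2 * T ^ 2 / eta) by (field; lra).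
    replace (eta * (INR N / eta)) with (INR N) by (field; lra).
    nra. }
  pose proof (zpow_odd_neg_sq_ge a b c N ltac:(split; nra)) as H.
  rewrite hcb, hcb2 in H. fold E in H.
  assert (Heta : (a + b) ^ 2 * E * eta = (b - a) ^ 2 * (E - / E)) by (unfold eta; field; lra).
  assert ((a + b) ^ 2 * E * (b ^ 2 * T ^ 2 / INR N) < (a + b) ^ 2 * E * eta)
    by (apply Rmult_lt_compat_l; [apply Rmult_lt_0_compat; [apply pow_lt|]|]; lra).
  nra.
Qed.

Lemma zpow_odd_neg_sq_self_le a T N : 0 < a -> 0 <= T -> 0 < INR N ->
  zpow_odd a (T / INR N) N (- a ^ 2) <= 2 * a * exp (a * T).
Proof.
  intros ha hT hN. rewrite zpow_odd_neg_sq_self by exact ha.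
  apply Rmult_le_compat_l; [lra|].
  replace (a * T) with (INR N * (T / INR N * a)) by (field; lra).
  apply pow_1p_le_exp.
  assert (0 <= T / INR N) by (apply Rdiv_le_0_compat; lra). nra.
Qed.

Lemma zpow_odd_ratio_gt a b T : 0 < a < b -> 0 < T ->
  exists n, let N := (2 * S n)%nat in
    T * (b - a) < ln (zpow_odd a (T / INR N) N (- b ^ 2) / zpow_odd a (T / INR N) N (- a ^ 2)).
Proof.
  intros hab hT.
  destruct (zpow_odd_neg_sq_gt a b T hab hT) as [M HM].
  destruct (INR_unbounded M) as [n Hn].
  exists n. intros N.
  assert (hnN : INR n <= INR N) by (apply le_INR; unfold N; lia).
  assert (hN : 0 < INR N) by (apply lt_0_INR; unfold N; lia).
  set (c := T / INR N).
  assert (Hb := HM N ltac:(lra)). fold c in Hb.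
  assert (Ha := zpow_odd_neg_sq_self_le a T N (proj1 hab) (Rlt_le _ _ hT) hN). fold c in Ha.
  assert (Ha0 : 0 < zpow_odd a c N (- a ^ 2)).
  { rewrite zpow_odd_neg_sq_self by lra.
    apply Rmult_lt_0_compat; [lra | apply pow_lt].
    assert (0 < c) by (apply Rdiv_lt_0_compat; lra). nra. }
  assert (HE : exp (T * (b - a)) * exp (a * T) = exp (b * T))
    by (rewrite <- exp_plus; f_equal; ring).
  rewrite <- (ln_exp (T * (b - a))). apply ln_increasing; [apply exp_pos|].
  apply (Rmult_lt_reg_r (zpow_odd a c N (- a ^ 2))); [exact Ha0|].
  unfold Rdiv. rewrite Rmult_assoc, Rinv_l, Rmult_1_r by lra.
  pose proof (exp_pos (T * (b - a))).
  assert (exp (T * (b - a)) * zpow_odd a c N (- a ^ 2)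
            <= exp (T * (b - a)) * (2 * a * exp (a * T)))
    by (apply Rmult_le_compat_l; lra).
  nra.
Qed.

Lemma partial_sum_log_ratio_gt a b T (omega : nat -> R) : 0 < a < b -> 0 < T ->
  (forall k, (1 <= k)%nat -> is_omega T a k (omega k)) ->
  exists n, T * (b - a) < sum_f_R0 (fun j => log_ratio a b (omega (S j))) n.
Proof.
  intros hab hT Hom.
  destruct (zpow_odd_ratio_gt a b T hab hT) as [n Hn]. exists n.
  eapply Rlt_le_trans; [exact Hn|].
  assert (hN : 0 < INR (2 * S n)) by (apply lt_0_INR; lia).
  apply (sum_log_ratio_ge_zpow_odd a b T); [exact hab | apply Rdiv_lt_0_compat; lra | | exact Hom].
  right. field. lra.
Qed.

Lemma is_omega_ge T a n w : 0 < T -> is_omega T a (S n) w -> INR n * PI / T <= w.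
Proof.
  intros hT [hw Hw]. pose proof (atan_bound (w / a)). rewrite S_INR in Hw.
  apply (Rmult_le_reg_r T); [exact hT|].
  unfold Rdiv. rewrite Rmult_assoc, Rinv_l, Rmult_1_r by lra. nra.
Qed.

Lemma ex_series_inv_consecutive : ex_series (fun n => / ((INR n + 1) * (INR n + 2))).
Proof.
  exists 1. change (is_lim_seq (sum_n (fun n => / ((INR n + 1) * (INR n + 2)))) 1).
  apply is_lim_seq_ext with (fun n => 1 - / (INR n + 2)).
  - intros n. induction n as [|n IH].
    + rewrite sum_O. simpl. field.
    + rewrite sum_Sn, <- IH, S_INR. unfold plus. simpl.
      pose proof (pos_INR n). field. lra.
  - replace (Finite 1) with (Finite (1 - 0)) by (f_equal; ring).
    apply is_lim_seq_minus'; [apply is_lim_seq_const|].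
    replace (Finite 0) with (Rbar_inv p_infty) by reflexivity.
    apply is_lim_seq_inv; [|discriminate].
    eapply is_lim_seq_plus; [apply is_lim_seq_INR | apply is_lim_seq_const | reflexivity].
Qed.

Lemma ex_series_log_ratio_omega a b T (omega : nat -> R) : 0 < a < b -> 0 < T ->
  (forall k, (1 <= k)%nat -> is_omega T a k (omega k)) ->
  ex_series (fun n => log_ratio a b (omega (S n))).
Proof.
  intros hab hT Hom.
  set (mu := Rmin (a ^ 2) ((PI / T) ^ 2)).
  assert (hmu : 0 < mu).
  { apply Rmin_pos; apply pow_lt; [lra | apply Rdiv_lt_0_compat; [apply PI_RGT_0 | exact hT]]. }
  assert (Hbound : forall n,
    log_ratio a b (omega (S n)) <= 6 * (b ^ 2 - a ^ 2) / mu * / ((INR n + 1) * (INR n + 2))).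
  { intros n.
    eapply Rle_trans; [apply log_ratio_le, hab|].
    pose proof (is_omega_ge T a n _ hT (Hom (S n) ltac:(lia))) as Hw.
    assert (hn : 0 <= INR n) by apply pos_INR.
    assert (Hw2 : (PI / T) ^ 2 * INR n ^ 2 <= omega (S n) ^ 2).
    { replace ((PI / T) ^ 2 * INR n ^ 2) with ((INR n * PI / T) ^ 2) by (field; lra).
      apply pow_incr. split; [|exact Hw].
      apply Rdiv_le_0_compat; [apply Rmult_le_pos; [exact hn | left; apply PI_RGT_0] | exact hT]. }
    assert (Hden : mu * ((INR n + 1) * (INR n + 2)) / 6 <= a ^ 2 + omega (S n) ^ 2).
    { assert (mu <= a ^ 2) by apply Rmin_l.
      assert (mu * INR n ^ 2 <= (PI / T) ^ 2 * INR n ^ 2)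
        by (apply Rmult_le_compat_r; [nra | apply Rmin_r]).
      assert (mu * ((INR n + 1) * (INR n + 2)) <= mu * (6 * (1 + INR n ^ 2)))
        by (apply Rmult_le_compat_l; nra).
      nra. }
    replace (6 * (b ^ 2 - a ^ 2) / mu * / ((INR n + 1) * (INR n + 2)))
      with ((b ^ 2 - a ^ 2) / (mu * ((INR n + 1) * (INR n + 2)) / 6)) by (field; lra).
    apply Rmult_le_compat_l; [nra|].
    apply Rinv_le_contravar; [|exact Hden].
    apply Rdiv_lt_0_compat; [apply Rmult_lt_0_compat; [exact hmu | nra] | lra]. }
  apply (@ex_series_le R_AbsRing R_CompleteNormedModule _
           (fun n => 6 * (b ^ 2 - a ^ 2) / mu * / ((INR n + 1) * (INR n + 2)))).
  - intros n. unfold norm; simpl. unfold abs; simpl.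
    rewrite Rabs_right by (apply Rle_ge, log_ratio_nonneg, hab).
    apply Hbound.
  - exact (ex_series_scal_l _ _ ex_series_inv_consecutive).
Qed.

Lemma sum_n_le_Series (u : nat -> R) n :
  (forall k, 0 <= u k) -> ex_series u -> sum_n u n <= Series u.
Proof.
  intros Hu Hex. apply is_lim_seq_incr_compare; [apply Series_correct, Hex|].
  intros k. rewrite sum_Sn. unfold plus. simpl. pose proof (Hu (S k)). lra.
Qed.

(** * The Shannon capacity *)

Section ShannonIntegral.
Variables a b : R.
Hypothesis hab : 0 < a < b.

Definition log_ratio_antideriv (w : R) : R :=
  w * log_ratio a b w + 2 * b * atan (w / b) - 2 * a * atan (w / a).

Lemma log_ratio_antideriv_odd w : log_ratio_antideriv (- w) = - log_ratio_antideriv w.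
Proof.
  unfold log_ratio_antideriv, log_ratio. replace ((- w) ^ 2) with (w ^ 2) by ring.
  unfold Rdiv. rewrite !Ropp_mult_distr_l_reverse, !atan_opp. ring.
Qed.

Lemma is_derive_log_ratio_antideriv w : is_derive log_ratio_antideriv w (log_ratio a b w).
Proof.
  unfold log_ratio_antideriv, log_ratio. auto_derive.
  - repeat split; try nra. apply Rdiv_lt_0_compat; nra.
  - replace (b * (b * 1) + w * (w * 1)) with (b ^ 2 + w ^ 2) by ring.
    replace (a * (a * 1) + w * (w * 1)) with (a ^ 2 + w ^ 2) by ring.
    unfold Rdiv. set (L := ln ((b ^ 2 + w ^ 2) * / (a ^ 2 + w ^ 2))).
    field. repeat split; nra.
Qed.

Lemma log_ratio_antideriv_near_p_infty w : 0 < w ->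
  Rabs (log_ratio_antideriv w - PI * (b - a)) <= (3 * b ^ 2 + a ^ 2) / w.
Proof.
  intros hw.
  assert (HL : w * log_ratio a b w <= (b ^ 2 - a ^ 2) / w).
  { apply Rle_trans with (w * ((b ^ 2 - a ^ 2) / (a ^ 2 + w ^ 2))).
    - apply Rmult_le_compat_l; [lra | apply log_ratio_le, hab].
    - apply (Rmult_le_reg_r (w * (a ^ 2 + w ^ 2))); [apply Rmult_lt_0_compat; nra|].
      replace (w * ((b ^ 2 - a ^ 2) / (a ^ 2 + w ^ 2)) * (w * (a ^ 2 + w ^ 2)))
        with ((b ^ 2 - a ^ 2) * w ^ 2) by (field; nra).
      replace ((b ^ 2 - a ^ 2) / w * (w * (a ^ 2 + w ^ 2)))
        with ((b ^ 2 - a ^ 2) * (a ^ 2 + w ^ 2)) by (field; lra).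
      apply Rmult_le_compat_l; nra. }
  assert (HL0 : 0 <= w * log_ratio a b w)
    by (apply Rmult_le_pos; [lra | apply log_ratio_nonneg, hab]).
  assert (Hb := atan_ge_PI2_sub_inv (w / b) ltac:(apply Rdiv_lt_0_compat; lra)).
  assert (Ha := atan_ge_PI2_sub_inv (w / a) ltac:(apply Rdiv_lt_0_compat; lra)).
  replace (/ (w / b)) with (b / w) in Hb by (field; lra).
  replace (/ (w / a)) with (a / w) in Ha by (field; lra).
  pose proof (atan_bound (w / b)). pose proof (atan_bound (w / a)).
  assert (2 * b * (PI / 2 - b / w) <= 2 * b * atan (w / b)) by (apply Rmult_le_compat_l; lra).
  assert (2 * a * (PI / 2 - a / w) <= 2 * a * atan (w / a)) by (apply Rmult_le_compat_l; lra).
  assert (2 * b * atan (w / b) <= 2 * b * (PI / 2)) by (apply Rmult_le_compat_l; lra).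
  assert (2 * a * atan (w / a) <= 2 * a * (PI / 2)) by (apply Rmult_le_compat_l; lra).
  assert (E : (3 * b ^ 2 + a ^ 2) / w = (b ^ 2 - a ^ 2) / w + 2 * b * (b / w) + 2 * a * (a / w))
    by (field; lra).
  assert (0 <= 2 * b * (b / w)) by (apply Rmult_le_pos; [|apply Rdiv_le_0_compat]; lra).
  unfold log_ratio_antideriv. apply Rabs_le. split; lra.
Qed.

Lemma log_ratio_antideriv_lim_p_infty :
  filterlim log_ratio_antideriv (Rbar_locally p_infty) (locally (PI * (b - a))).
Proof.
  apply (is_lim_spec log_ratio_antideriv p_infty (PI * (b - a))).
  intros [eps heps]. simpl.
  assert (hK : 0 < 3 * b ^ 2 + a ^ 2) by nra.
  exists ((3 * b ^ 2 + a ^ 2) / eps). intros w hw.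
  assert (0 < (3 * b ^ 2 + a ^ 2) / eps) by (apply Rdiv_lt_0_compat; lra).
  assert (hw0 : 0 < w) by lra.
  eapply Rle_lt_trans; [apply log_ratio_antideriv_near_p_infty, hw0|].
  apply (Rmult_lt_reg_r (w / eps)); [apply Rdiv_lt_0_compat; lra|].
  replace ((3 * b ^ 2 + a ^ 2) / w * (w / eps)) with ((3 * b ^ 2 + a ^ 2) / eps) by (field; lra).
  replace (eps * (w / eps)) with w by (field; lra).
  exact hw.
Qed.

Lemma log_ratio_antideriv_lim_m_infty :
  filterlim log_ratio_antideriv (Rbar_locally m_infty) (locally (- (PI * (b - a)))).
Proof.
  apply filterlim_ext with (fun w => - log_ratio_antideriv (- w)).
  { intros w. rewrite log_ratio_antideriv_odd. ring. }
  apply filterlim_comp with (locally (PI * (b - a))).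
  - apply filterlim_comp with (Rbar_locally p_infty);
      [apply (filterlim_Rbar_opp m_infty) | apply log_ratio_antideriv_lim_p_infty].
  - apply (filterlim_opp (PI * (b - a))).
Qed.

Lemma is_RInt_gen_log_ratio :
  is_RInt_gen (log_ratio a b) (Rbar_locally m_infty) (Rbar_locally p_infty) (2 * PI * (b - a)).
Proof.
  assert (HD : Derive log_ratio_antideriv = log_ratio a b).
  { apply functional_extensionality. intros w.
    apply is_derive_unique, is_derive_log_ratio_antideriv. }
  replace (2 * PI * (b - a)) with (PI * (b - a) - - (PI * (b - a))) by ring.
  rewrite <- HD. apply is_RInt_gen_Derive.
  - apply filter_forall. intros _ w _. eexists. apply is_derive_log_ratio_antideriv.
  - apply filter_forall. intros _ w _. rewrite HD.
    apply (@ex_derive_continuous R_AbsRing R_NormedModule (log_ratio a b)).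
    unfold log_ratio. auto_derive. repeat split; try nra. apply Rdiv_lt_0_compat; nra.
  - apply log_ratio_antideriv_lim_m_infty.
  - apply log_ratio_antideriv_lim_p_infty.
Qed.

End ShannonIntegral.

Lemma one_add_snr_eq a b P n0 w : 0 < a -> 0 < n0 -> b ^ 2 = a ^ 2 + 4 * a * P / n0 ->
  1 + lam a P w / (n0 / 2) = (b ^ 2 + w ^ 2) / (a ^ 2 + w ^ 2).
Proof. intros ha hn0 hb. unfold lam. rewrite hb. field. split; nra. Qed.

Lemma Csh_eq n0 a b P : 0 < n0 -> 0 < a < b -> b ^ 2 = a ^ 2 + 4 * a * P / n0 ->
  Csh n0 a P = (b - a) / 2.
Proof.
  intros hn0 hab hb. unfold Csh.
  replace (fun w => ln (1 + 2 * P * a / (a ^ 2 + w ^ 2) / (n0 / 2))) with (log_ratio a b).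
  - rewrite (is_RInt_gen_unique _ _ (is_RInt_gen_log_ratio a b hab)).
    field. apply PI_neq0.
  - apply functional_extensionality. intros w. unfold log_ratio.
    rewrite <- (one_add_snr_eq a b P n0 w) by lra. unfold lam. do 4 f_equal. ring.
Qed.

Theorem theorem2 (T n0 alpha : R) (omega : nat -> R)
  (hT : 0 < T) (hn0 : 0 < n0) (halpha : 0 < alpha)
  (homega : forall k : nat, (1 <= k)%nat -> is_omega T alpha k (omega k)) :
  exists delta : R, 0 < delta /\
    forall P : R, 0 < P < delta -> CT T n0 alpha P omega > Csh n0 alpha P.
Proof.
  (* The inequality holds for every [P > 0], so any [delta] works. *)
  exists 1. split; [lra|]. intros P [hP _].
  set (b := sqrt (alpha ^ 2 + 4 * alpha * P / n0)).
  assert (hsnr : 0 < 4 * alpha * P / n0) by (apply Rdiv_lt_0_compat; nra).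
  assert (hb : b ^ 2 = alpha ^ 2 + 4 * alpha * P / n0) by (apply pow2_sqrt; nra).
  assert (hab : 0 < alpha < b) by (assert (0 <= b) by apply sqrt_pos; nra).
  unfold CT. rewrite (Csh_eq n0 alpha b P hn0 hab hb).
  rewrite (Series_ext _ (fun n => log_ratio alpha b (omega (S n))))
    by (intros n; unfold log_ratio; rewrite one_add_snr_eq with (b := b); auto).
  destruct (partial_sum_log_ratio_gt alpha b T omega hab hT homega) as [n Hn].
  pose proof (sum_n_le_Series _ n (fun k => log_ratio_nonneg alpha b hab _)
                (ex_series_log_ratio_omega alpha b T omega hab hT homega)) as Hle.
  rewrite sum_n_Reals in Hle.
  replace ((b - alpha) / 2) with (/ (2 * T) * (T * (b - alpha))) by (field; lra).
  apply Rlt_gt, Rmult_lt_compat_l; [apply Rinv_0_lt_compat | ]; lra.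
Qed.
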